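(* A persistent cochain complex $\mathbb{X}\in p\mathsf{Ch}^*_\mathbb{Q}$ is locally compact if and only if the persistence module $\mathbb{X}^k$ is locally compact for every $k\ge0$.
   Context: $p\mathsf{Ch}^*_\mathbb{Q}$ is the category of functors from $[0,\infty)$ to non-negatively graded rational cochain complexes; $\mathbb{X}^k$ is the persistence module of degree-$k$ cochains. A persistence module (functor $[0,\infty)\to\mathsf{Vec}_\mathbb{Q}$) is compact if it is a compact object (equivalently tame with finite-dimensional components), and is locally compact if every element lies in a compact submodule. A persistent complex is compact if it is a compact object of $p\mathsf{Ch}^*_\mathbb{Q}$ (equivalently tame and with each component a bounded, degreewise finite-dimensional complex), and $\mathbb{X}$ is locally compact if every element $x\in\mathbb{X}^k(r)$ lies in some compact subcomplex of $\mathbb{X}$. *)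

From HB Require Import structures.
From mathcomp Require Import all_boot all_order all_algebra.
From Stdlib Require Import Rdefinitions Raxioms.
From Stdlib Require List.

Set Implicit Arguments.
Unset Strict Implicit.
Unset Printing Implicit Defensive.

Import GRing.Theory.
Local Open Scope ring_scope.

Definition Rnn : Type := {r : R | Rle R0 r}.
Definition rnn_le (r s : Rnn) : Prop := Rle (proj1_sig r) (proj1_sig s).

(* A persistence module: a functor [0,oo) -> Vec_Q.  The structure map
   pm_map r s is only meaningful (and only constrained) when r <= s. *)
Record pmod := PMod {
  pm_V :> Rnn -> lmodType rat;
  pm_map : forall r s : Rnn, pm_V r -> pm_V s;
  pm_map_lin : forall r s, rnn_le r s ->
    forall (a : rat) (x y : pm_V r), pm_map s (a *: x + y) = a *: pm_map s x + pm_map s y;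
  pm_map_id : forall r (x : pm_V r), pm_map r x = x;
  pm_map_comp : forall r s t, rnn_le r s -> rnn_le s t ->
    forall x : pm_V r, pm_map t (pm_map s x) = pm_map t x
}.
Arguments pm_map : clear implicits.

(* A persistent (non-negatively graded, rational) cochain complex:
   a functor [0,oo) -> Ch^*_Q, given degreewise by persistence modules
   X^k = pc_mod k together with natural differentials d^k : X^k -> X^{k+1}. *)
Record pcomplex := PComplex {
  pc_mod : nat -> pmod;
  pc_d : forall (k : nat) (r : Rnn), pc_mod k r -> pc_mod k.+1 r;
  pc_d_lin : forall k r (a : rat) (x y : pc_mod k r),
    pc_d (a *: x + y) = a *: pc_d x + pc_d y;
  pc_dd : forall k r (x : pc_mod k r), pc_d (pc_d x) = 0;
  pc_d_nat : forall k r s, rnn_le r s -> forall x : pc_mod k r,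
    pc_d (pm_map (pc_mod k) r s x) = pm_map (pc_mod k.+1) r s (pc_d x)
}.
Arguments pc_d : clear implicits.

Definition fd_subspace (V : lmodType rat) (P : V -> Prop) : Prop :=
  exists vs : seq V, (forall i, leq i.+1 (size vs) -> P (nth 0 vs i)) /\
    forall x, P x -> exists c : 'I_(size vs) -> rat,
      x = \sum_(i < size vs) c i *: nth 0 vs i.

Definition is_submod (M : pmod) (S : forall r, M r -> Prop) : Prop :=
  (forall r, S r 0) /\
  (forall r (a : rat) (x y : M r), S r x -> S r y -> S r (a *: x + y)) /\
  (forall r s (x : M r), rnn_le r s -> S r x -> S s (pm_map M r s x)).

Definition restr_iso (M : pmod) (S : forall r, M r -> Prop) (r s : Rnn) : Prop :=
  (forall x y : M r, S r x -> S r y -> pm_map M r s x = pm_map M r s y -> x = y) /\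
  (forall y : M s, S s y -> exists x : M r, S r x /\ pm_map M r s x = y).

Definition tame_wrt (T : list R) (M : pmod) (S : forall r, M r -> Prop) : Prop :=
  forall r s : Rnn, rnn_le r s ->
    (forall t, List.In t T -> ~ (Rlt (proj1_sig r) t /\ Rle t (proj1_sig s))) ->
    restr_iso S r s.

Definition compact_submod (M : pmod) (S : forall r, M r -> Prop) : Prop :=
  is_submod S /\ (exists T : list R, tame_wrt T S) /\ (forall r, fd_subspace (S r)).

Definition locally_compact_mod (M : pmod) : Prop :=
  forall r (x : M r), exists S : forall r, M r -> Prop, compact_submod S /\ S r x.

Definition is_subcomplex (X : pcomplex) (S : forall k r, pc_mod X k r -> Prop) : Prop :=
  (forall k, is_submod (S k)) /\
  (forall k r (x : pc_mod X k r), S k r x -> S k.+1 r (pc_d X k r x)).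

Definition compact_subcomplex (X : pcomplex) (S : forall k r, pc_mod X k r -> Prop) : Prop :=
  is_subcomplex S /\
  (exists T : list R, forall k, tame_wrt T (S k)) /\
  (forall r, exists N : nat, forall k, leq N.+1 k -> forall x, S k r x -> x = 0) /\
  (forall k r, fd_subspace (S k r)).

Definition locally_compact_complex (X : pcomplex) : Prop :=
  forall k r (x : pc_mod X k r),
    exists S : forall k r, pc_mod X k r -> Prop, compact_subcomplex S /\ S k r x.

From Stdlib Require Import RIneq Lra Classical.
From Stdlib Require List.
From HB Require Import structures.
From mathcomp Require Import all_boot all_order all_algebra.

Set Implicit Arguments.
Unset Strict Implicit.
Unset Printing Implicit Defensive.

Import GRing.Theory.
Local Open Scope ring_scope.

(* A compact subcomplex is degreewise a compact submodule.  Conversely, if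
   x in X^k(r) lies in a compact submodule C of X^k, then C in degree k, its
   image dC in degree k+1 and 0 elsewhere form a compact subcomplex containing
   x.  Only the tameness of dC needs an argument: its structure maps are onto
   because those of C are, but their kernels may change at values that are not
   critical for C.  Such values are death times of elements of the
   finite-dimensional spaces dC(b), b = 0 or a critical value of C.  In a locally
   compact module an element dies at a critical value of a compact submodule
   containing it, and elements with pairwise distinct death times are linearly
   independent, so a finite-dimensional subspace has finitely many death times,
   which are added to the critical values of C. *)

Section LinearFun.
Variables (F : pzRingType) (U V : lmodType F) (f : U -> V).
Hypothesis f_linear : linear f.

Let fL : {linear U -> V} := HB.pack f (GRing.isLinear.Build _ _ _ _ f f_linear).

Lemma linear_fun0 : f 0 = 0.
Proof. exact: (linear0 fL). Qed.

Lemma linear_fun_sum n (a : 'I_n -> F) (x : 'I_n -> U) :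
  f (\sum_(i < n) a i *: x i) = \sum_(i < n) a i *: f (x i).
Proof. by rewrite -[f _]/(fL _) linear_sum; apply: eq_bigr => i _; rewrite linearZ. Qed.

End LinearFun.

Lemma span_dependent (F : fieldType) (V : lmodType F) m n (v : 'I_n -> V)
    (c : 'I_m -> 'I_n -> F) :
  (n < m)%N -> exists a : 'I_m -> F,
    (exists i, a i != 0) /\ \sum_(i < m) a i *: \sum_(j < n) c i j *: v j = 0.
Proof.
move=> ltnm; pose A := \matrix_(i, j) c i j.
have : kermx A != 0.
  by rewrite kermx_eq0 -row_leq_rank -ltnNge (leq_ltn_trans (rank_leq_col A)).
case/rowV0Pn => a /sub_kermxP aA a_neq0; exists (a 0); split.
  apply/existsP; apply: contraNT a_neq0 => /existsPn a0.
  by apply/eqP/rowP => i; rewrite mxE; apply/eqP/negPn/a0.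
under eq_bigr => i _ do rewrite scaler_sumr.
rewrite exchange_big /= big1 // => j _.
under eq_bigr => i _ do rewrite scalerA.
have := congr1 (fun B : 'rV_n => B 0 j) aA; rewrite !mxE => aAj.
rewrite -scaler_suml.
have -> : \sum_(i < m) a 0 i * c i j = 0.
  by rewrite -{}[RHS]aAj; apply: eq_bigr => i _; rewrite mxE.
by rewrite scale0r.
Qed.

Lemma list_argmin (A : Type) (f : A -> R) (P : A -> Prop) (l : list A) :
  (exists x, List.In x l /\ P x) ->
  exists m, [/\ List.In m l, P m & forall y, List.In y l -> P y -> Rle (f m) (f y)].
Proof.
elim: l => [[x [[] _]] | a l IH] ex_al.
case: (classic (exists x, List.In x l /\ P x)) => [/IH [m [lm Pm m_min]] | no_l].
  case: (classic (P a /\ Rlt (f a) (f m))) => [[Pa am] | not_am].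
    exists a; split=> [|//|y [<- | ly] Py]; [by left | exact: Rle_refl |].
    by have := m_min y ly Py; lra.
  exists m; split=> [|//|y [<- | ly] Py]; [by right | | exact: m_min].
  by apply: Rnot_lt_le => am; apply: not_am.
have Pa : P a by case: ex_al => x [[<- | lx] Px] //; case: no_l; exists x.
exists a; split=> [|//|y [<- | ly] Py]; [by left | exact: Rle_refl |].
by case: no_l; exists y.
Qed.

Lemma fin_argmax (I : finType) (f : I -> R) (P : I -> Prop) :
  (exists i, P i) -> exists i0, P i0 /\ forall i, P i -> Rle (f i) (f i0).
Proof.
have In_enum (i : I) : List.In i (enum I).
  have : i \in enum I by rewrite mem_enum.
  by elim: (enum I) => // j s IH; rewrite in_cons => /orP [/eqP -> | /IH]; [left | right].
move=> [i Pi]; have [|m [_ Pm m_min]] := @list_argmin _ (fun j => Ropp (f j)) P (enum I).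
  by exists i.
by exists m; split=> // j Pj; have := m_min j (In_enum j) Pj; lra.
Qed.

Lemma list_choice (A : Type) (Q : A -> list R -> Prop) (l : list A) :
  (forall a T T', List.incl T T' -> Q a T -> Q a T') ->
  (forall a, List.In a l -> exists T, Q a T) ->
  exists T, forall a, List.In a l -> Q a T.
Proof.
move=> Q_incl; elim: l => [|a l IH] exQ; first by exists nil.
have [T1 QT1] := exQ a (or_introl erefl).
have [T2 QT2] := IH (fun b lb => exQ b (or_intror lb)).
exists (T1 ++ T2) => b [<- | lb].
  by apply: Q_incl QT1; apply: List.incl_appl; apply: List.incl_refl.
by apply: Q_incl (QT2 b lb); apply: List.incl_appr; apply: List.incl_refl.
Qed.

Lemma finite_of_card_bounded (P : R -> Prop) n :
  (forall m (x : 'I_m -> R), injective x -> (forall i, P (x i)) -> (m <= n)%N) ->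
  exists T, forall t, P t -> List.In t T.
Proof.
move=> card_P; apply: NNPP => infinite_P.
have fresh T : exists t, P t /\ ~ List.In t T.
  apply: NNPP => no_fresh; apply: infinite_P; exists T => t Pt.
  by apply: NNPP => tT; apply: no_fresh; exists t.
have long k : exists l, [/\ List.NoDup l, forall t, List.In t l -> P t & length l = k].
  elim: k => [|k [l [nd_l lP <-]]]; first by exists nil; split=> //; constructor.
  have [t [Pt tl]] := fresh l.
  by exists (t :: l); split=> //; [constructor | move=> u [<- | /lP]].
have [l [nd_l lP len_l]] := long n.+1.
have lt_len (i : 'I_n.+1) : (i < length l)%coq_nat by apply/ltP; rewrite len_l.
suff : (n.+1 <= n)%N by rewrite ltnn.
apply: (card_P _ (fun i => List.nth i l R0)) => [i j /= eq_ij | i].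
  by apply: val_inj; apply: (proj1 (List.NoDup_nth l R0) nd_l _ _ (lt_len i) (lt_len j)).
exact/lP/List.nth_In.
Qed.

Definition rnn0 : Rnn := exist (fun r => Rle R0 r) R0 (Rle_refl R0).

Lemma rnn0_le (r : Rnn) : rnn_le rnn0 r.
Proof. exact: proj2_sig r. Qed.

Lemma rnn_le_refl (r : Rnn) : rnn_le r r.
Proof. exact: Rle_refl. Qed.

Lemma rnn_le_trans (r s t : Rnn) : rnn_le r s -> rnn_le s t -> rnn_le r t.
Proof. exact: Rle_trans. Qed.

Definition crit_free (T : list R) (r s : Rnn) : Prop :=
  forall t, List.In t T -> ~ (Rlt (proj1_sig r) t /\ Rle t (proj1_sig s)).

Lemma crit_free_incl T T' r s : List.incl T T' -> crit_free T' r s -> crit_free T r s.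
Proof. by move=> TT' fT' t /TT'; apply: fT'. Qed.

(* [b] is the last element of [T] in [[a, r]], or [a] if there is none. *)
Lemma exists_crit_base (T : list R) (a : Rnn) :
  exists B : list Rnn, forall r, rnn_le a r ->
    exists b, [/\ List.In b B, rnn_le a b, rnn_le b r & crit_free T b r].
Proof.
elim: T => [|t T [B baseB]].
  by exists [:: a] => r ar; exists a; split=> //; [left | apply: rnn_le_refl].
case: (Rle_dec (proj1_sig a) t) => [at_ | ta]; last first.
  exists B => r ar; have [b [Bb ab br fb]] := baseB r ar.
  by exists b; split=> // u [<- | /fb //]; rewrite /rnn_le in ab; lra.
pose tb : Rnn := exist _ t (Rle_trans _ _ _ (proj2_sig a) at_).
exists (tb :: B) => r ar; have [b [Bb ab br fb]] := baseB r ar.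
case: (classic (Rlt (proj1_sig b) t /\ Rle t (proj1_sig r))) => [[bt tr] | not_btr].
  exists tb; split=> //; first by left.
  move=> u [<- | uT] /= [tu ur]; first lra.
  by apply: (fb u uT); split=> //; lra.
by exists b; split=> //; [right | move=> u [<- | /fb]].
Qed.

Lemma tame_wrt_incl (M : pmod) (S : forall r, M r -> Prop) T T' :
  List.incl T T' -> tame_wrt T S -> tame_wrt T' S.
Proof. by move=> TT' tS r s rs fT'; apply: tS rs (crit_free_incl TT' fT'). Qed.

Lemma pm_map0 (M : pmod) r s : rnn_le r s -> pm_map M r s 0 = 0.
Proof. by move/pm_map_lin/linear_fun0. Qed.

Lemma dies_later (M : pmod) t0 u v (w : M t0) :
  rnn_le t0 u -> rnn_le u v -> pm_map M t0 u w = 0 -> pm_map M t0 v w = 0.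
Proof. by move=> t0u uv wu; rewrite -(pm_map_comp t0u uv) wu pm_map0. Qed.

Lemma tame_dies_at_base (M : pmod) (D : forall r, M r -> Prop) T t0 (w : M t0) b u :
  is_submod D -> tame_wrt T D -> D t0 w -> rnn_le t0 b -> rnn_le b u ->
  crit_free T b u -> pm_map M t0 u w = 0 -> pm_map M t0 b w = 0.
Proof.
move=> [D0 [_ Dmap]] tD Dw t0b bu fT wu.
have [inj _] := tD b u bu fT.
by apply: inj; [exact: Dmap | exact: D0 | rewrite pm_map_comp // wu pm_map0].
Qed.

Section DeathTimes.
Variable M : pmod.

Definition death_time t0 (w : M t0) (d : Rnn) : Prop :=
  [/\ rnn_le t0 d, pm_map M t0 d w = 0 &
      forall u, rnn_le t0 u -> Rlt (proj1_sig u) (proj1_sig d) -> pm_map M t0 u w <> 0].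

Lemma death_time_exists t0 (w : M t0) s :
  locally_compact_mod M -> rnn_le t0 s -> pm_map M t0 s w = 0 ->
  exists d, death_time w d /\ rnn_le d s.
Proof.
move=> lcM t0s ws.
have [D [[Dsub [[T tD] _]] Dw]] := lcM t0 w.
have [B baseB] := exists_crit_base T t0.
pose P b := [/\ rnn_le t0 b, rnn_le b s & pm_map M t0 b w = 0].
have [|d [_ [t0d ds dw] d_min]] := @list_argmin _ (@proj1_sig _ _) P B.
  have [b [Bb t0b bs fb]] := baseB s t0s.
  exists b; split=> //; rewrite /P; split=> //.
  exact: (tame_dies_at_base Dsub tD Dw t0b bs fb ws).
exists d; split=> //; split=> // u t0u ud uw.
have [c [Bc t0c cu fc]] := baseB u t0u.
have cs : rnn_le c s by rewrite /rnn_le in cu ds *; lra.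
have := d_min c Bc (And3 t0c cs (tame_dies_at_base Dsub tD Dw t0c cu fc uw)).
by rewrite /rnn_le in cu; lra.
Qed.

(* Pick [i0] of largest death time among the nonzero coefficients: mapping the
   relation to the next smaller death time kills all the other terms. *)
Lemma death_times_free t0 m (w : 'I_m -> M t0) (d : 'I_m -> Rnn) (a : 'I_m -> rat) :
  injective (fun i => proj1_sig (d i)) ->
  (forall i, Rlt (proj1_sig t0) (proj1_sig (d i))) ->
  (forall i, death_time (w i) (d i)) ->
  \sum_(i < m) a i *: w i = 0 -> forall i, a i = 0.
Proof.
move=> d_inj t0d wd wsum i; case: (eqVneq (a i) 0) => // ai; exfalso.
have [i0 [ai0 i0_max]] :=
  @fin_argmax _ (fun j => proj1_sig (d j)) (fun j => a j != 0) (ex_intro _ i ai).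
have [u [t0u ui0 u_max]] : exists u : Rnn, [/\ rnn_le t0 u, Rlt (proj1_sig u) (proj1_sig (d i0))
    & forall j, a j != 0 -> j != i0 -> rnn_le (d j) u].
  case: (classic (exists j, a j != 0 /\ j != i0)) => [ex_j | no_j]; last first.
    exists t0; split=> [||j aj ji0]; [exact: rnn_le_refl | exact: t0d | by case: no_j; exists j].
  have [j1 [[aj1 j1i0] j1_max]] := @fin_argmax _ (fun j => proj1_sig (d j)) _ ex_j.
  exists (d j1); split=> [||j aj ji0]; first by apply: Rlt_le; apply: t0d.
    have := i0_max j1 aj1; have : proj1_sig (d j1) <> proj1_sig (d i0).
      by move/d_inj/eqP; rewrite (negbTE j1i0).
    lra.
  by have := j1_max j (conj aj ji0); rewrite /rnn_le; lra.
have := congr1 (pm_map M t0 u) wsum.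
rewrite linear_fun_sum ?pm_map0 //; last exact: pm_map_lin.
rewrite (bigD1 i0) //= big1 ?addr0 => [/eqP | j ji0].
  rewrite scaler_eq0 (negbTE ai0) /= => /eqP.
  by have [_ _ alive] := wd i0; apply: alive.
case: (eqVneq (a j) 0) => [-> | aj]; first by rewrite scale0r.
by have [t0dj djw _] := wd j; rewrite (dies_later t0dj (u_max j aj ji0) djw) scaler0.
Qed.

Lemma fd_death_times_finite t0 (P : M t0 -> Prop) : fd_subspace P ->
  exists T, forall w d, P w -> death_time w d -> Rlt (proj1_sig t0) (proj1_sig d) ->
    List.In (proj1_sig d) T.
Proof.
case=> vs [_ span_vs].
pose Del t := exists w d, [/\ P w, death_time w d, Rlt (proj1_sig t0) (proj1_sig d)
  & proj1_sig d = t].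
suff [T DelT] : exists T, forall t, Del t -> List.In t T.
  by exists T => w d Pw wd t0d; apply: DelT; exists w, d.
apply: (finite_of_card_bounded (n := size vs)) => m x x_inj xDel.
have [w wP] := fin_all_exists xDel; have [d wdP] := fin_all_exists wP.
have Pw i : P (w i) by case: (wdP i).
have [c wc] := fin_all_exists (fun i => span_vs _ (Pw i)).
rewrite leqNgt; apply/negP => lt_n_m.
have [a [[i ai] asum]] := span_dependent (fun j => vs`_j) c lt_n_m.
suff : a i = 0 by apply/eqP.
apply: (@death_times_free t0 m w d) => [j1 j2 /= dj | j | j |].
- by apply: x_inj; case: (wdP j1) => _ _ _ <-; case: (wdP j2) => _ _ _ <-.
- by case: (wdP j).
- by case: (wdP j).
- by rewrite -{}[RHS]asum; apply: eq_bigr => j _; rewrite -wc.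
Qed.

Definition kernel_crit t0 (P : M t0 -> Prop) (T : list R) : Prop :=
  forall w r s, P w -> rnn_le t0 r -> rnn_le r s -> crit_free T r s ->
    pm_map M t0 s w = 0 -> pm_map M t0 r w = 0.

Lemma kernel_crit_incl t0 (P : M t0 -> Prop) T T' :
  List.incl T T' -> kernel_crit P T -> kernel_crit P T'.
Proof. by move=> TT' kT w r s Pw t0r rs fT'; apply: kT rs (crit_free_incl TT' fT'). Qed.

Lemma fd_kernel_crit t0 (P : M t0 -> Prop) :
  locally_compact_mod M -> fd_subspace P -> exists T, kernel_crit P T.
Proof.
move=> lcM /fd_death_times_finite [T dT]; exists T => w r s Pw t0r rs fT ws.
have [d [[t0d dw alive] ds]] := death_time_exists lcM (rnn_le_trans t0r rs) ws.
case: (Rle_dec (proj1_sig d) (proj1_sig r)) => dr; first exact: dies_later t0d dr dw.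
have rd := Rnot_le_lt _ _ dr.
have t0d' : Rlt (proj1_sig t0) (proj1_sig d) by rewrite /rnn_le in t0r; lra.
by case: (fT _ (dT w d Pw (And3 t0d dw alive) t0d')).
Qed.

End DeathTimes.

Section PointwiseEquivalent.
Variable M : pmod.
Variables S S' : forall r, M r -> Prop.
Arguments S : clear implicits.
Arguments S' : clear implicits.
Hypothesis eqS : forall r x, S r x <-> S' r x.

Lemma submod_ext : is_submod S -> is_submod S'.
Proof.
move=> [S0 [Slin Smap]]; split=> [r|]; first exact/eqS.
split=> [r a x y /eqS Sx /eqS Sy | r s x rs /eqS Sx]; apply/eqS; [exact: Slin | exact: Smap].
Qed.

Lemma tame_wrt_ext T : tame_wrt T S -> tame_wrt T S'.
Proof.
move=> tS r s rs fT; have [inj surj] := tS r s rs fT; split.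
  by move=> x y /eqS Sx /eqS Sy; apply: inj.
by move=> y /eqS /surj [x [Sx <-]]; exists x; split=> //; apply/eqS.
Qed.

Lemma fd_subspace_ext r : fd_subspace (S r) -> fd_subspace (S' r).
Proof.
move=> [vs [vsS span_vs]]; exists vs; split=> [i lt_i | x /eqS]; last exact: span_vs.
exact/eqS/vsS.
Qed.

End PointwiseEquivalent.

Section ZeroSubmodule.
Variable M : pmod.

Lemma zero_submod : is_submod (fun r (x : M r) => x = 0).
Proof.
split=> //; split=> [r a x y -> -> | r s x rs ->]; first by rewrite scaler0 addr0.
exact: pm_map0.
Qed.

Lemma zero_tame T : tame_wrt T (fun r (x : M r) => x = 0).
Proof.
move=> r s rs _; split=> [x y -> -> //| y ->].
by exists 0; split=> //; apply: pm_map0.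
Qed.

Lemma zero_fd r : fd_subspace (fun x : M r => x = 0).
Proof. by exists [::]; split=> // x ->; exists (fun _ => 0); rewrite big_ord0. Qed.

End ZeroSubmodule.

Section Image.
Variables (M N : pmod) (f : forall r, M r -> N r).
Arguments f : clear implicits.
Hypothesis f_linear : forall r, linear (f r).
Hypothesis f_natural : forall r s, rnn_le r s ->
  forall x, f s (pm_map M r s x) = pm_map N r s (f r x).

Definition pimg (C : forall r, M r -> Prop) : forall r, N r -> Prop :=
  fun r y => exists2 c, C r c & y = f r c.
Arguments pimg : clear implicits.

Variable C : forall r, M r -> Prop.
Arguments C : clear implicits.

Lemma pimg_submod : is_submod C -> is_submod (pimg C).
Proof.
move=> [C0 [Clin Cmap]]; split=> [r|]; first by exists 0; rewrite ?linear_fun0.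
split=> [r a _ _ [x Cx ->] [y Cy ->] | r s _ rs [x Cx ->]].
  by exists (a *: x + y); [exact: Clin | rewrite f_linear].
by exists (pm_map M r s x); [exact: Cmap | rewrite f_natural].
Qed.

Lemma pimg_fd r : fd_subspace (C r) -> fd_subspace (pimg C r).
Proof.
move=> [vs [vsC span_vs]]; exists (map (f r) vs); split.
  by move=> i; rewrite size_map => lt_i; rewrite (nth_map 0) //; exists vs`_i => //; apply: vsC.
move=> _ [x Cx ->]; have [a ->] := span_vs x Cx.
rewrite linear_fun_sum // size_map; exists a.
by apply: eq_bigr => i _; rewrite (nth_map 0).
Qed.

(* Injectivity is the delicate part: the kernels of the structure maps on
   [pimg C] may jump away from the critical values of [C].  Since [C] is
   generated by the finitely many finite-dimensional spaces [C b] at its base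
   points, [fd_kernel_crit] in [N] supplies the missing critical values. *)
Lemma pimg_tame TC : is_submod C -> tame_wrt TC C -> (forall r, fd_subspace (C r)) ->
  locally_compact_mod N -> exists T, tame_wrt T (pimg C).
Proof.
move=> [_ [Clin _]] tC fdC lcN.
have [B baseB] := exists_crit_base TC rnn0.
have [TB kerB] : exists TB, forall b, List.In b B -> kernel_crit (pimg C b) TB.
  apply: list_choice => [b T T' TT' | b _]; first exact: kernel_crit_incl.
  exact: fd_kernel_crit lcN (pimg_fd (fdC b)).
exists (TC ++ TB) => r s rs fT.
have fTC : crit_free TC r s by apply: crit_free_incl fT; apply/List.incl_appl/List.incl_refl.
have fTB : crit_free TB r s by apply: crit_free_incl fT; apply/List.incl_appr/List.incl_refl.
have [_ surj] := tC r s rs fTC.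
split=> [_ _ [c1 Cc1 ->] [c2 Cc2 ->] e | _ [c Cc ->]]; last first.
  have [c' [Cc' <-]] := surj c Cc.
  by exists (f r c'); split; [exists c' | rewrite f_natural].
have [b [Bb _ br fb]] := baseB r (rnn0_le r).
have [c0 [Cc0 c0c]] := (tC b r br fb).2 _ (Clin r (-1) c2 c1 Cc2 Cc1).
have : pm_map N b r (f b c0) = 0.
  apply: (kerB b Bb _ r s _ br rs fTB); first by exists c0.
  rewrite -(pm_map_comp br rs) -f_natural // c0c f_linear pm_map_lin // e.
  by rewrite scaleN1r addNr.
by rewrite -f_natural // c0c f_linear scaleN1r addrC => /subr0_eq.
Qed.

Lemma pimg_compact : compact_submod C -> locally_compact_mod N -> compact_submod (pimg C).
Proof.
move=> [Csub [[TC tC] fdC]] lcN; split; first exact: pimg_submod.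
by split; [exact: pimg_tame tC fdC lcN | move=> r; exact: pimg_fd].
Qed.

End Image.

Section TwoTerm.
Variables (X : pcomplex) (k : nat).
Variables (A : forall r, pc_mod X k r -> Prop) (B : forall r, pc_mod X k.+1 r -> Prop).
Arguments A : clear implicits.
Arguments B : clear implicits.

(* [A] in degree [k], [B] in degree [k+1], [0] elsewhere.  The three cases are
   disjoint, so that [two_term_k] holds without assuming [A r 0]. *)
Definition two_term : forall j r, pc_mod X j r -> Prop := fun j r y =>
  [\/ exists e : j = k, A r (ecast i (pc_mod X i r) e y),
      exists e : j = k.+1, B r (ecast i (pc_mod X i r) e y)
    | [/\ j <> k, j <> k.+1 & y = 0]].
Arguments two_term : clear implicits.

Lemma two_term_k r y : two_term k r y <-> A r y.
Proof.
split=> [[[e] | [e] | [] //] | Ay]; last by constructor 1; exists erefl.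
  by rewrite (eq_axiomK e).
by case: (n_Sn k e).
Qed.

Lemma two_term_k1 r y : two_term k.+1 r y <-> B r y.
Proof.
split=> [[[e] | [e] | [_ []] //] | By]; last by constructor 2; exists erefl.
  by case: (n_Sn k (esym e)).
by rewrite (eq_axiomK e).
Qed.

Lemma two_term_other j r y : j <> k -> j <> k.+1 -> two_term j r y <-> y = 0.
Proof. by move=> jk jk1; split=> [[[e] | [e] | []] // | ->]; constructor 3. Qed.

Lemma two_term_ind (Q : forall j, (forall r, pc_mod X j r -> Prop) -> Prop) :
  (forall j (S S' : forall r, pc_mod X j r -> Prop),
     (forall r y, S r y <-> S' r y) -> Q j S -> Q j S') ->
  Q k A -> Q k.+1 B -> (forall j, Q j (fun r y => y = 0)) -> forall j, Q j (two_term j).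
Proof.
move=> Q_ext QA QB Q0 j.
have [-> | /eqP jk] := eqVneq j k.
  by apply: Q_ext QA => r y; apply: iff_sym; apply: two_term_k.
have [-> | /eqP jk1] := eqVneq j k.+1.
  by apply: Q_ext QB => r y; apply: iff_sym; apply: two_term_k1.
by apply: Q_ext (Q0 j) => r y; apply: iff_sym; apply: two_term_other.
Qed.

Hypothesis dA : forall r c, A r c -> B r (pc_d X k r c).
Hypothesis dB : forall r y, B r y -> pc_d X k.+1 r y = 0.

Lemma two_term_subcomplex : is_submod A -> is_submod B -> is_subcomplex two_term.
Proof.
move=> Asub Bsub.
have sub j : is_submod (two_term j).
  apply: (two_term_ind (Q := fun j S => is_submod S)) => // [{}j S S' /submod_ext // | {}j].
  exact: zero_submod.
split=> // j r.
have [-> y | /eqP jk] := eqVneq j k; first by move/two_term_k/dA/two_term_k1.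
have [-> y | /eqP jk1 y] := eqVneq j k.+1.
  by move/two_term_k1/dB ->; apply: (sub k.+2).1.
move/(two_term_other y jk jk1) ->; rewrite (linear_fun0 (@pc_d_lin X j r)).
exact: (sub j.+1).1.
Qed.

Lemma two_term_compact : compact_submod A -> compact_submod B -> compact_subcomplex two_term.
Proof.
move=> [Asub [[TA tA] fdA]] [Bsub [[TB tB] fdB]].
split; first exact: two_term_subcomplex.
split.
  exists (TA ++ TB); apply: (two_term_ind (Q := fun j S => tame_wrt (TA ++ TB) S)).
  - by move=> j S S' /tame_wrt_ext ext /ext.
  - by apply: tame_wrt_incl _ tA; apply/List.incl_appl/List.incl_refl.
  - by apply: tame_wrt_incl _ tB; apply/List.incl_appr/List.incl_refl.
  - by move=> j; apply: zero_tame.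
split.
  move=> r; exists k.+1 => j lt_k1_j y.
  have /eqP jk : j != k by rewrite gtn_eqF // ltnW.
  have /eqP jk1 : j != k.+1 by rewrite gtn_eqF.
  by move/(two_term_other y jk jk1).
apply: (two_term_ind (Q := fun j S => forall r, fd_subspace (S r))) => //.
  by move=> j S S' eqS fdS r; apply: (fd_subspace_ext eqS (fdS r)).
by move=> j r; apply: zero_fd.
Qed.

End TwoTerm.

Lemma compact_subcomplex_component (X : pcomplex) (S : forall k r, pc_mod X k r -> Prop) k :
  compact_subcomplex S -> compact_submod (S k).
Proof. by move=> [[Ssub _] [[T tS] [_ fdS]]]; split=> //; split; [exists T | ]. Qed.

Theorem mainTheorem18 (X : pcomplex) :
  locally_compact_complex X <-> (forall k : nat, locally_compact_mod (pc_mod X k)).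
Proof.
split=> [lcX k r x | lcX k r x].
  have [S [Scomp Sx]] := lcX k r x.
  by exists (S k); split=> //; apply: compact_subcomplex_component.
have [C [Ccomp Cx]] := lcX k r x.
have dC : compact_submod (pimg (pc_d X k) C).
  apply: pimg_compact (lcX k.+1) => //; [exact: pc_d_lin | exact: pc_d_nat].
exists (two_term C (pimg (pc_d X k) C)); split; last exact/two_term_k.
apply: two_term_compact Ccomp dC => [r' c Cc | r' _ [c _ ->]]; first by exists c.
exact: pc_dd.
Qed.
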